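(* For every finite nonempty set $V$ of nails and every $k$ with $1 \le k \le |V|$, every word $H_k(V)$ produced by the following recursive construction solves the specification $\kappa_k(V)$ defined by $\kappa_k(V)(S) = \mathsf{fall} \iff |S| \ge k$ (i.e.\ $H_k(V)|_S = 0 \iff |S| \ge k$ for all $S \subseteq V$). Construction: if $|V| = 1$ (so $k=1$), $H_1(V)$ is the single generator. If $|V| \ge 2$, choose any split $V = L \sqcup R$ with $n_1 = |L| \ge 1$, $n_2 = |R| \ge 1$; for each feasible $j$, i.e.\ $\max(0, k-n_2) \le j \le \min(k, n_1)$, form \[ D_j = \begin{cases} H_k(R), & j = 0,\\ H_j(L) + H_{k-j}(R), & 0 < j < k,\\ H_k(L), & j = k,\end{cases} \] where the words $H_\cdot(L)$, $H_\cdot(R)$ are produced recursively by the same construction; then let $H_k(V)$ be the value of any commutator tree whose leaves are the words $D_j$, each feasible $j$ used exactly once (for instance the tree obtained by Huffman placement, repeatedly combining the two currently shortest subexpressions into a commutator).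
   Context: Words are elements of the free group $F(V)$ on a finite set $V$ of nails, written additively ($+$ group operation, $-$ inverse, $0$ identity); the commutator is $[a,b] = a + b - a - b$. A commutator tree is a finite rooted binary tree with leaves labelled by words, whose value is computed by taking the commutator of the values of the two children at each internal node. For $S \subseteq V$, $h|_S$ is the image of $h$ under the homomorphism killing the generators in $S$. A word $h$ solves a specification $f: 2^V \to \{\mathsf{hang},\mathsf{fall}\}$ if $h|_S = 0 \iff f(S)=\mathsf{fall}$ for all $S\subseteq V$. Solving $\kappa_k(V)$ with $V=\{1,\dots,n\}$ is the same as solving the $k$-out-of-$n$ picture-hanging puzzle: the word is nonzero, removing any $k$ nails makes it $0$, removing fewer leaves it nonzero. *)

(* Free group F(T) on the nails of a finite type T,
   represented by freely reduced words (canonical normal forms). *)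
From mathcomp Require Import all_boot.
Set Implicit Arguments. Unset Strict Implicit. Unset Printing Implicit Defensive.

Section FreeGroup.
Variable T : finType.

(* a letter: a generator x with sign (true = x, false = -x) *)
Definition letter := (T * bool)%type.

Definition cancels (a b : letter) : bool := (a.1 == b.1) && (a.2 != b.2).

Definition push (a : letter) (acc : seq letter) : seq letter :=
  match acc with
  | b :: t => if cancels a b then t else a :: acc
  | [::] => [:: a]
  end.
Definition reduce (s : seq letter) : seq letter := foldr push [::] s.

Definition fg_zero : seq letter := [::].
Definition fg_gen (x : T) : seq letter := [:: (x, true)].
Definition fg_add (a b : seq letter) : seq letter := reduce (a ++ b).
Definition fg_opp (a : seq letter) : seq letter :=
  reduce (rev [seq (l.1, ~~ l.2) | l <- a]).
Definition fg_comm (a b : seq letter) : seq letter :=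
  fg_add (fg_add (fg_add a b) (fg_opp a)) (fg_opp b).

(* h|_S : image under the homomorphism killing the generators in S *)
Definition restrict (S : {set T}) (h : seq letter) : seq letter :=
  reduce [seq l <- h | l.1 \notin S].

Inductive ctree := Leaf of seq letter | Node of ctree & ctree.

Fixpoint cvalue (t : ctree) : seq letter :=
  match t with
  | Leaf w => w
  | Node l r => fg_comm (cvalue l) (cvalue r)
  end.

Fixpoint cleaves (t : ctree) : seq (seq letter) :=
  match t with
  | Leaf w => [:: w]
  | Node l r => cleaves l ++ cleaves r
  end.

(* D_j built from chosen words hL j = H_j(L), hR i = H_i(R) *)
Definition Dj (k : nat) (hL hR : nat -> seq letter) (j : nat) : seq letter :=
  if j == 0 then hR k
  else if j == k then hL k
  else fg_add (hL j) (hR (k - j)).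

Inductive Hword : {set T} -> nat -> seq letter -> Prop :=
| Hword_single (x : T) : Hword [set x] 1 (fg_gen x)
| Hword_split (V L R : {set T}) (k : nat) (hL hR : nat -> seq letter) (t : ctree) :
    2 <= #|V| ->
    1 <= k <= #|V| ->
    [disjoint L & R] -> L :|: R = V -> 1 <= #|L| -> 1 <= #|R| ->
    (forall j, k - #|R| <= j <= minn k #|L| -> 0 < j -> Hword L j (hL j)) ->
    (forall j, k - #|R| <= j <= minn k #|L| -> j < k -> Hword R (k - j) (hR (k - j))) ->
    perm_eq (cleaves t)
      [seq Dj k hL hR j | j <- iota (k - #|R|) ((minn k #|L|).+1 - (k - #|R|))] ->
    Hword V k (cvalue t).

End FreeGroup.

From mathcomp Require Import all_boot zify.
Set Implicit Arguments. Unset Strict Implicit. Unset Printing Implicit Defensive.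

(* Killing the nails of S is a homomorphism, so [a, b] dies under S iff the
   restrictions of a and b commute.  In a free group commuting elements are
   powers of a common root and there is no torsion, so a further restriction
   that kills one of two commuting nontrivial elements kills the other.  Hence,
   if at every node of a commutator tree each S killing no leaf extends to an
   S' killing leaves of exactly one subtree, the tree dies under S iff one of
   its leaves does.  The leaf D_j dies under S iff j <= |S :&: L| and
   k - j <= |S :&: R|, so some leaf dies iff |S| >= k; and any set of leaves is
   split as required by growing S towards a suitable cut index j. *)

Section CatPowers.
Variable A : Type.
Implicit Types u v w : seq A.

Definition wpow w n := flatten (nseq n w).

Lemma wpowS w n : wpow w n.+1 = w ++ wpow w n.
Proof. by []. Qed.

Lemma wpowD w m n : wpow w (m + n) = wpow w m ++ wpow w n.
Proof. by rewrite /wpow nseqD flatten_cat. Qed.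

Lemma wpow_nil n : wpow [::] n = [::].
Proof. by elim: n. Qed.

Lemma wpow_rev w n : rev (wpow w n) = wpow (rev w) n.
Proof.
elim: n => [|n IH] //.
by rewrite wpowS rev_cat IH -addn1 wpowD [wpow _ 1]/wpow /= cats0.
Qed.

Lemma cat_commute_wpow u v : u ++ v = v ++ u ->
  exists w a b, u = wpow w a /\ v = wpow w b.
Proof.
move: {2}(size u + size v) (leqnn (size u + size v)) => N.
elim: N u v => [|N IH] u v Hs E.
  by case: u v Hs {E} => [|? ?] [|? ?] // _; exists [::], 0, 0.
wlog Huv : u v Hs E / size u <= size v.
  move=> Hw; case: (leqP (size u) (size v)) => [|/ltnW] Hle; first exact: Hw.
  have [w [a [b [-> ->]]]] := Hw v u ltac:(lia) (esym E) Hle.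
  by exists w, b, a.
case: u Hs E Huv => [|x u'] Hs E Huv.
  by exists v, 0, 1; rewrite /wpow /= cats0.
set u := x :: u' in Hs E Huv *.
set v' := drop (size u) v.
have Ev : v = u ++ v'.
  rewrite -{1}(cat_take_drop (size u) v); congr (_ ++ _).
  by rewrite -(takel_cat u Huv) -E take_size_cat.
have E' : u ++ v' = v' ++ u.
  by move: E; rewrite {1 2}Ev -catA => /(congr1 (drop (size u))); rewrite !drop_size_cat.
have Hs' : size u + size v' <= N by rewrite size_drop; move: Hs Huv; rewrite /u /=; lia.
have [w [a [b [Hu Hv']]]] := IH u v' Hs' E'.
by exists w, a, (a + b); rewrite Ev wpowD -Hu -Hv'.
Qed.

End CatPowers.

Section FreeGroup.
Variable T : finType.
Implicit Types (s t a b w X Y : seq (letter T)) (x y : letter T) (S V L R : {set T}).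

Definition flip x : letter T := (x.1, ~~ x.2).
Definition wopp s := rev (map flip s).
Definition reduced s := sorted (fun x y => ~~ cancels x y) s.
Definition wcommute a b := reduce (a ++ b) = reduce (b ++ a).
Definition wconj x s := flip x :: s ++ [:: x].

Lemma flipK : involutive flip.
Proof. by case=> x1 x2; rewrite /flip /= negbK. Qed.

Lemma cancelsC x y : cancels x y = cancels y x.
Proof. by rewrite /cancels (eq_sym x.1); case: (x.2); case: (y.2). Qed.

Lemma cancels_flip x y : cancels x y -> y = flip x.
Proof.
case: x y => [x1 x2] [y1 y2]; rewrite /cancels /flip /= => /andP [/eqP -> ].
by case: x2; case: y2.
Qed.

Lemma cancels_flipr x : cancels x (flip x).
Proof. by case: x => x1 x2; rewrite /cancels /= eqxx; case: x2. Qed.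

Lemma cancels_flipl x : cancels (flip x) x.
Proof. by rewrite cancelsC cancels_flipr. Qed.

Lemma woppK : involutive wopp.
Proof. by move=> s; rewrite /wopp map_rev revK -map_comp (eq_map flipK) map_id. Qed.

Lemma wopp_cat a b : wopp (a ++ b) = wopp b ++ wopp a.
Proof. by rewrite /wopp map_cat rev_cat. Qed.

Lemma wopp_rcons s x : wopp (rcons s x) = flip x :: wopp s.
Proof. by rewrite -cats1 wopp_cat. Qed.

Lemma size_wopp s : size (wopp s) = size s.
Proof. by rewrite size_rev size_map. Qed.

Lemma wopp_wpow s n : wopp (wpow s n) = wpow (wopp s) n.
Proof. by rewrite /wopp /wpow map_flatten map_nseq -/(wpow _ n) wpow_rev. Qed.

Lemma reduced_push x r : reduced r -> reduced (push x r).
Proof.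
case: r => [|y r] //= Hr; case: ifP => H; first exact: path_sorted Hr.
by rewrite /reduced /= H.
Qed.

Lemma reduced_reduce s : reduced (reduce s).
Proof. by elim: s => [|x s IH] //=; apply: reduced_push. Qed.

Lemma reduce_id r : reduced r -> reduce r = r.
Proof.
elim: r => [|x r IH] //= Hr; rewrite IH; last exact: path_sorted Hr.
by case: r Hr {IH} => [|y r] //= /andP [/negbTE ->].
Qed.

Lemma reduceK s : reduce (reduce s) = reduce s.
Proof. exact/reduce_id/reduced_reduce. Qed.

Lemma reduce_cancel2 x y t : cancels x y -> reduce (x :: y :: t) = reduce t.
Proof.
move=> Hxy /=; have := reduced_reduce t.
case: (reduce t) => [|z r] /=; first by rewrite Hxy.
case: ifP => [Hyz|_]; last by rewrite /= Hxy.
rewrite (cancels_flip Hyz) (cancels_flip Hxy) flipK.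
by case: r => [|u r] //= /andP [/negbTE ->].
Qed.

Lemma reduce_cat a b : reduce (a ++ b) = foldr (@push T) (reduce b) a.
Proof. by rewrite /reduce foldr_cat. Qed.

Lemma reduce_catr a b : reduce (a ++ reduce b) = reduce (a ++ b).
Proof. by rewrite !reduce_cat reduceK. Qed.

Lemma reduce_catl a b : reduce (reduce a ++ b) = reduce (a ++ b).
Proof.
elim: a => [|x a IH] //=; rewrite -IH.
case: (reduce a) => [|y r] //=; case: ifP => // Hxy.
by rewrite -[RHS]/(reduce (x :: y :: r ++ b)) reduce_cancel2.
Qed.

Lemma reduce_cat_congr a a' b b' : reduce a = reduce a' -> reduce b = reduce b' ->
  reduce (a ++ b) = reduce (a' ++ b').
Proof.
by move=> Ha Hb; rewrite -reduce_catl -reduce_catr Ha Hb reduce_catr reduce_catl.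
Qed.

Lemma reduce_cancel_mid a c x y : cancels x y ->
  reduce (a ++ x :: y :: c) = reduce (a ++ c).
Proof. by move=> H; rewrite -reduce_catr reduce_cancel2 // reduce_catr. Qed.

Lemma reduce_cat_wopp a : reduce (a ++ wopp a) = [::].
Proof.
elim: a => [|x a IH] //.
have -> : (x :: a) ++ wopp (x :: a) = [:: x] ++ (a ++ wopp a) ++ [:: flip x].
  by rewrite -cat1s wopp_cat !catA.
by rewrite -reduce_catr -(reduce_catl (a ++ wopp a)) IH /= cancels_flipr.
Qed.

Lemma reduce_wopp_cat a : reduce (wopp a ++ a) = [::].
Proof. by rewrite -{2}(woppK a) reduce_cat_wopp. Qed.

Lemma reduce_wopp s : reduce (wopp (reduce s)) = reduce (wopp s).
Proof.
have Ex z u : wopp (z :: u) = wopp u ++ [:: flip z] by rewrite -cat1s wopp_cat.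
elim: s => [|x s IH] //.
rewrite [in RHS]Ex -reduce_catl -IH reduce_catl -Ex /=.
case: (reduce s) => [|y r] //=; case: ifP => // Hxy.
rewrite !Ex -catA (cancels_flip Hxy) flipK reduce_cancel_mid ?cats0 //.
exact: cancels_flipr.
Qed.

Lemma restrict_reduce S s : restrict S (reduce s) = restrict S s.
Proof.
rewrite /restrict.
have Hpush x r : reduce [seq l <- push x r | l.1 \notin S] =
                 reduce [seq l <- x :: r | l.1 \notin S].
  case: r => [|y r] //=; case: ifP => // Hxy.
  have -> : x.1 = y.1 by case/andP: Hxy => /eqP.
  by case: (y.1 \notin S) => //; rewrite -[RHS]/(reduce (x :: y :: _)) reduce_cancel2.
elim: s => [|x s IH] //=; rewrite Hpush /=.
by case: ifP => _ //=; rewrite IH.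
Qed.

Lemma reduced_restrict S w : reduced (restrict S w).
Proof. exact: reduced_reduce. Qed.

Lemma restrict_congr S a a' : reduce a = reduce a' -> restrict S a = restrict S a'.
Proof. by move=> E; rewrite -restrict_reduce E restrict_reduce. Qed.

Lemma restrict_cat S a b : restrict S (a ++ b) = reduce (restrict S a ++ restrict S b).
Proof. by rewrite /restrict filter_cat reduce_catl reduce_catr. Qed.

Lemma restrict_wopp S a : restrict S (wopp a) = reduce (wopp (restrict S a)).
Proof. by rewrite /restrict reduce_wopp /wopp filter_rev filter_map. Qed.

Lemma restrict_wpow S w n : restrict S (wpow w n) = reduce (wpow (restrict S w) n).
Proof. by elim: n => [|n IH] //; rewrite wpowS restrict_cat IH reduce_catr. Qed.

Lemma restrict_restrict S S' w : S \subset S' -> restrict S' (restrict S w) = restrict S' w.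
Proof.
move=> sub; rewrite [restrict S w]/restrict restrict_reduce /restrict -filter_predI.
congr reduce; apply: eq_filter => l /=.
by apply: andb_idr; apply: contra; apply: (subsetP sub).
Qed.

Lemma reduce_wconj_congr x s t : reduce s = reduce t ->
  reduce (wconj x s) = reduce (wconj x t).
Proof.
have E u : wconj x u = [:: flip x] ++ u ++ [:: x] by [].
by move=> Est; rewrite !E; apply: reduce_cat_congr => //; apply: reduce_cat_congr.
Qed.

Lemma reduce_wconj_nil x : reduce (wconj x [::]) = [::].
Proof. by rewrite /= cancels_flipl. Qed.

Lemma reduce_wconj_cat x s t : reduce (wconj x s ++ wconj x t) = reduce (wconj x (s ++ t)).
Proof.
have -> : wconj x s ++ wconj x t = (flip x :: s) ++ x :: flip x :: t ++ [:: x].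
  by rewrite /wconj cat_cons -catA.
by rewrite reduce_cancel_mid ?cancels_flipr // /wconj cat_cons catA.
Qed.

Lemma reduce_wconjK x s : reduce (wconj (flip x) (wconj x s)) = reduce s.
Proof.
rewrite /wconj flipK cat_cons reduce_cancel2 ?cancels_flipr // -catA.
by rewrite (reduce_cancel_mid s [::]) ?cats0 // cancels_flipr.
Qed.

Lemma restrict_wconj_eq0 S x s : restrict S s = [::] -> restrict S (wconj x s) = [::].
Proof.
have E : wconj x s = [:: flip x] ++ s ++ [:: x] by [].
move=> Hs; rewrite E restrict_cat restrict_cat Hs cat0s reduce_catr -restrict_cat.
by rewrite /restrict /=; case: (x.1 \notin S) => //=; rewrite cancels_flipl.
Qed.

Lemma reduce_wpow_wconj x m n : reduce (wpow (wconj x m) n) = reduce (wconj x (wpow m n)).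
Proof.
elim: n => [|n IH]; first by rewrite reduce_wconj_nil.
by rewrite !wpowS -reduce_catr IH reduce_catr reduce_wconj_cat.
Qed.

Lemma reduced_cases s : reduced s ->
  [\/ s = [::], exists x s', s = x :: s' /\ ~~ cancels (last x s') x
    | exists x m, s = wconj x m /\ reduced m].
Proof.
case: s => [|x s] Hs; first by constructor 1.
case Hc: (cancels (last x s) x); last by constructor 2; exists x, s; rewrite Hc.
constructor 3; case/lastP: s Hs Hc => [|m z] Hs Hc.
  by move: Hc; rewrite /= /cancels eqxx; case: (x.2).
rewrite last_rcons in Hc; exists z, m; split.
  by rewrite /wconj -(cancels_flip Hc) cats1.
by move: Hs; rewrite /reduced -cats1 -cat_cons => /cat_sorted2 [/path_sorted].
Qed.

Lemma reduced_wpow x s n : reduced (x :: s) -> ~~ cancels (last x s) x ->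
  reduced (wpow (x :: s) n).
Proof.
move=> Hr Hl; elim: n => [|n IH] //.
case: n IH => [|n] IH; first by rewrite /wpow /= cats0.
rewrite wpowS /reduced cat_cons /= cat_path; apply/andP; split; first exact: Hr.
by rewrite wpowS cat_cons /= Hl; exact: IH.
Qed.

Lemma reduce_wpow_eq0 r n : reduced r -> 0 < n -> reduce (wpow r n) = [::] -> r = [::].
Proof.
move: {2}(size r) (leqnn (size r)) => N; elim: N r => [|N IH] r Hs Hr Hn H.
  by case: r Hs {Hr H}.
case: (reduced_cases Hr) => [//|[x [s [Er Hc]]]|[x [m [Er Hm]]]]; subst r.
  by move: H; rewrite reduce_id ?reduced_wpow //; clear IH; case: n Hn.
have Hm0 : reduce (wpow m n) = [::].
  rewrite -(reduce_wconjK x) (@reduce_wconj_congr _ _ [::]) ?reduce_wconj_nil //.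
  by rewrite -reduce_wpow_wconj H.
have Em : m = [::] by apply: IH Hm Hn Hm0; move: Hs; rewrite /wconj /= size_cat /=; lia.
by move: Hr; rewrite Em /reduced /= cancels_flipl.
Qed.

Lemma restrict_wpow_eq0 S w n : 0 < n ->
  restrict S (wpow w n) = [::] -> restrict S w = [::].
Proof.
by move=> Hn; rewrite restrict_wpow => /(reduce_wpow_eq0 (reduced_restrict S w) Hn).
Qed.

Lemma cancel_decomp X Y : reduced X -> reduced Y ->
  exists X1 P Y1, [/\ X = X1 ++ P, Y = wopp P ++ Y1 & reduce (X ++ Y) = X1 ++ Y1].
Proof.
move=> HX HY; rewrite reduce_cat (reduce_id HY).
elim: X HX => [|x X IH] HX; first by exists [::], [::], Y.
have [X1 [P [Y1 [E1 E2 E3]]]] := IH (path_sorted HX).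
rewrite /= E3; case: X1 E1 E3 => [|x1 X1] E1 E3; last first.
  exists [:: x, x1 & X1], P, Y1; split; rewrite ?E1 //=.
  by move: HX; rewrite E1 /= => /andP [/negbTE ->].
case: Y1 E2 E3 => [|y Y1] E2 E3; first by exists [:: x], P, [::]; rewrite E1.
case Hc: (cancels x y); last by exists [:: x], P, (y :: Y1); rewrite E1 /= Hc.
exists [::], (x :: P), Y1; split; rewrite ?E1 //= ?Hc //.
by rewrite -cat1s wopp_cat E2 -catA (cancels_flip Hc).
Qed.

Lemma head_wopp_suffix x X' X1 P Y1 : x :: X' = X1 ++ P -> P != [::] ->
  ~~ cancels (last x X') x -> head x (wopp P ++ Y1) != x.
Proof.
case/lastP: P => [|P z] // EX _; rewrite wopp_rcons /=.
have -> : last x X' = z by move/(congr1 (last x)): EX; rewrite /= last_cat last_rcons.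
by apply: contra => /eqP <-; exact: cancels_flipr.
Qed.

(* Both X Y and Y X lose the same number of letters to cancellation.  If none
   cancel, or the cancelled part swallows X or Y, the two reduced products give
   a commutation of plain words.  Otherwise the reduced product X1 Y1 = Y2 X2
   would start both with x and with the inverse of the last letter of X, which
   cyclic reduction of X forbids. *)
Lemma cyc_commute_wpow x X' Y : reduced (x :: X') -> ~~ cancels (last x X') x ->
  reduced Y -> wcommute (x :: X') Y ->
  exists w (m n : nat), x :: X' = wpow w m /\ (Y = wpow w n \/ Y = wpow (wopp w) n).
Proof.
move=> HX Hcyc HY E.
have [X1 [P [Y1 [EX EY EXY]]]] := cancel_decomp HX HY.
have [Y2 [Q [X2 [FY FX FYX]]]] := cancel_decomp HY HX.
have E12 : X1 ++ Y1 = Y2 ++ X2 by rewrite -EXY -FYX.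
move: (congr1 size EX) (congr1 size EY) (congr1 size FY) (congr1 size FX) (congr1 size E12).
rewrite !size_cat !size_wopp => sEX sEY sFY sFX sE.
have sPQ : size P = size Q by lia.
have sX12 : size X1 = size X2 by lia.
have sY12 : size Y1 = size Y2 by lia.
clear sEX sEY sFY sFX sE.
have [P0|P0] := eqVneq P [::].
  have Q0 : Q = [::] by apply/size0nil; rewrite -sPQ P0.
  rewrite P0 /= ?cats0 in EX EY; rewrite Q0 /= ?cats0 in FY FX.
  subst X1 Y1 Y2 X2.
  have [w [a [b [-> ->]]]] := cat_commute_wpow E12.
  by exists w, a, b; split; [|left].
have [Y10|Y10] := eqVneq Y1 [::].
  have Y20 : Y2 = [::] by apply/size0nil; rewrite -sY12 Y10.
  rewrite Y10 Y20 cats0 /= in E12; rewrite Y10 cats0 in EY.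
  rewrite Y20 /= in FY; subst X2 Q.
  have [w [a [b [EX1 EP]]]] : exists w (m n : nat), X1 = wpow w m /\ P = wpow w n.
    by apply: cat_commute_wpow; rewrite -EX FX EY woppK.
  exists w, (a + b), b; split; last by right; rewrite EY EP wopp_wpow.
  by rewrite EX wpowD EX1 EP.
have [X10|X10] := eqVneq X1 [::].
  have X20 : X2 = [::] by apply/size0nil; rewrite -sX12 X10.
  rewrite X10 X20 cats0 /= in E12; rewrite X20 cats0 in FX.
  rewrite X10 /= in EX; subst Y2 P.
  have [w [a [b [EX' EY1]]]] :
      exists w (m n : nat), wopp (x :: X') = wpow w m /\ Y1 = wpow w n.
    by apply: cat_commute_wpow; rewrite -EY FY FX woppK.
  exists (wopp w), a, (a + b); split; first by rewrite -wopp_wpow -EX' woppK.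
  by right; rewrite woppK EY EX' EY1 wpowD.
have Y2n : Y2 != [::] by apply: contraNneq Y10 => Y20; rewrite -size_eq0 sY12 Y20.
have := head_wopp_suffix Y1 EX P0 Hcyc; rewrite -EY FY.
clear -EX E12 X10 Y2n; case: Y2 E12 Y2n => [|y2 Y2] //.
by case: X1 EX X10 => [|x1 X1] // [<- _] _ [<- _] _; rewrite /= eqxx.
Qed.

Lemma wcommute_wconj x s t : wcommute s t ->
  wcommute (reduce (wconj x s)) (reduce (wconj x t)).
Proof.
by rewrite /wcommute !reduce_catl !reduce_catr !reduce_wconj_cat; apply: reduce_wconj_congr.
Qed.

(* Conjugate X down to a cyclically reduced word; there X and Y are powers of a
   common root, which S kills since S kills a nontrivial power of it. *)
Lemma restrict_commute_eq0 S X Y : reduced X -> reduced Y -> X != [::] ->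
  wcommute X Y -> restrict S X = [::] -> restrict S Y = [::].
Proof.
move: {2}(size X) (leqnn (size X)) => N.
elim: N X Y => [|N IH] X Y Hs HX HY HX0 E HSX; first by case: X Hs HX0 {HX E HSX}.
case: (reduced_cases HX) => [EX|[x [X' [EX Hc]]]|[x [m [EX Hm]]]]; subst X => //.
  have [w [i [j [EXw EY]]]] := cyc_commute_wpow HX Hc HY E.
  have Hw : restrict S w = [::].
    by apply: (@restrict_wpow_eq0 _ _ i); [case: i EXw | rewrite -EXw].
  by case: EY => ->; rewrite restrict_wpow ?restrict_wopp Hw ?wpow_nil.
set Y' := reduce (wconj (flip x) Y).
have Em : reduce (wconj (flip x) (wconj x m)) = m by rewrite reduce_wconjK reduce_id.
have Hm0 : m != [::] by apply: contraTneq HX => ->; rewrite /reduced /= cancels_flipl.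
have E' : wcommute m Y' by rewrite -Em; apply: wcommute_wconj.
have HSm : restrict S m = [::] by rewrite -Em restrict_reduce restrict_wconj_eq0.
have Hsm : size m <= N by move: Hs; rewrite /wconj /= size_cat /=; lia.
have HSY' : restrict S Y' = [::] := IH m Y' Hsm Hm (reduced_reduce _) Hm0 E' HSm.
rewrite -(restrict_congr S (reduce_wconjK (flip x) Y)).
by apply: restrict_wconj_eq0; rewrite -restrict_reduce.
Qed.

Lemma reduce_wopp_cancel s t u : reduce (s ++ wopp t ++ t ++ u) = reduce (s ++ u).
Proof. by apply: reduce_cat_congr => //; rewrite catA -reduce_catl reduce_wopp_cat. Qed.

Lemma fg_commE a b : fg_comm a b = reduce (a ++ b ++ wopp a ++ wopp b).
Proof.
rewrite /fg_comm /fg_add /fg_opp -/(wopp a) -/(wopp b) !catA.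
apply: reduce_cat_congr; last exact: reduceK.
by rewrite reduceK; apply: reduce_cat_congr; rewrite reduceK.
Qed.

Lemma fg_comm0l b : fg_comm [::] b = [::].
Proof. by rewrite fg_commE /= ?cats0 reduce_cat_wopp. Qed.

Lemma fg_comm0r a : fg_comm a [::] = [::].
Proof. by rewrite fg_commE /= ?cats0 reduce_cat_wopp. Qed.

Lemma fg_comm_eq0 a b : fg_comm a b = [::] -> wcommute a b.
Proof.
rewrite fg_commE /wcommute => E.
have E1 := reduce_wopp_cancel (a ++ b ++ wopp a) b a; rewrite -!catA in E1.
have E2 := reduce_wopp_cancel (a ++ b) a [::]; rewrite -!catA !cats0 in E2.
rewrite -E2 -E1.
have -> : a ++ b ++ wopp a ++ wopp b ++ b ++ a = (a ++ b ++ wopp a ++ wopp b) ++ b ++ a.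
  by rewrite -!catA.
by rewrite -reduce_catl E.
Qed.

Lemma restrict_fg_comm S a b :
  restrict S (fg_comm a b) = fg_comm (restrict S a) (restrict S b).
Proof.
rewrite !fg_commE restrict_reduce !restrict_cat !restrict_wopp.
do 2!(apply: reduce_cat_congr => //; rewrite reduceK).
by apply: reduce_cat_congr; rewrite reduceK.
Qed.

Definition killed S w := restrict S w == [::].

Lemma killed_fg_comm a b :
  (forall S, ~~ killed S a -> ~~ killed S b ->
     exists2 S' : {set T}, S \subset S' & killed S' a != killed S' b) ->
  forall S, killed S (fg_comm a b) = killed S a || killed S b.
Proof.
move=> sep S; rewrite /killed restrict_fg_comm.
have [->|Ha] := eqVneq (restrict S a) [::]; first by rewrite fg_comm0l eqxx.
have [->|Hb] := eqVneq (restrict S b) [::]; first by rewrite fg_comm0r eqxx orbT.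
apply/negbTE/eqP => /fg_comm_eq0 E; have [S' sub] := sep S Ha Hb.
have kill u v : restrict S u != [::] -> wcommute (restrict S u) (restrict S v) ->
    restrict S' (restrict S u) = [::] -> restrict S' (restrict S v) = [::].
  by move=> Hu; apply: restrict_commute_eq0; rewrite ?reduced_restrict.
rewrite /killed -(restrict_restrict a sub) -(restrict_restrict b sub).
move=> /negP; apply; apply/eqP; apply/idP/idP => /eqP H; apply/eqP.
  exact: (kill a b).
exact: (kill b a).
Qed.

Definition separated (A B : seq (seq (letter T))) := forall S,
  ~~ has (killed S) A -> ~~ has (killed S) B ->
  exists2 S' : {set T}, S \subset S' & has (killed S') A != has (killed S') B.

Fixpoint separating (t : ctree T) : Prop :=
  if t is Node a b then [/\ separated (cleaves a) (cleaves b), separating a & separating b]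
  else True.

Lemma cleaves_neq0 (t : ctree T) : cleaves t != [::].
Proof. by elim: t => [w|a IHa b IHb] //=; case: (cleaves a) IHa. Qed.

Lemma killed_cvalue (t : ctree T) : separating t ->
  forall S, killed S (cvalue t) = has (killed S) (cleaves t).
Proof.
elim: t => [w _ S|a IHa b IHb [sep Ha Hb] S] /=; first by rewrite orbF.
rewrite has_cat -(IHa Ha) -(IHb Hb); apply: killed_fg_comm => {}S.
rewrite (IHa Ha) (IHb Hb) => nA nB; have [S' ?] := sep S nA nB.
by exists S'; rewrite ?IHa ?IHb.
Qed.

Definition supported (V : {set T}) (w : seq (letter T)) := all (fun l => l.1 \in V) w.

Lemma mem_reduce s : {subset reduce s <= s}.
Proof.
elim: s => [|x s IH] //= l.
have Hpush r : l \in push x r -> l \in x :: r.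
  by case: r => [|y r] //=; case: ifP => // _ Hl; rewrite !inE Hl !orbT.
by move/Hpush; rewrite !inE => /orP [-> //|/IH ->]; rewrite orbT.
Qed.

Lemma supported_cat V a b : supported V (a ++ b) = supported V a && supported V b.
Proof. exact: all_cat. Qed.

Lemma supported_reduce V s : supported V s -> supported V (reduce s).
Proof. by move=> /allP H; apply/allP => l /mem_reduce /H. Qed.

Lemma supported_restrict V S w : supported V w -> supported V (restrict S w).
Proof.
move=> H; apply/supported_reduce; rewrite /supported all_filter.
by apply: sub_all H => l /= ->; rewrite implybT.
Qed.

Lemma supported_subset V V' w : V \subset V' -> supported V w -> supported V' w.
Proof. by move=> /subsetP sub; apply: sub_all => l /sub. Qed.

Lemma supported_fg_comm V a b : supported V a -> supported V b -> supported V (fg_comm a b).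
Proof.
move=> Ha Hb; rewrite fg_commE; apply: supported_reduce.
rewrite /supported !all_cat /wopp !all_rev !all_map.
by apply/and4P; split; [exact: Ha | exact: Hb | exact: Ha | exact: Hb].
Qed.

Lemma supported_cvalue V (t : ctree T) :
  all (supported V) (cleaves t) -> supported V (cvalue t).
Proof.
elim: t => [w|a IHa b IHb] /=; first by rewrite andbT.
by rewrite all_cat => /andP [/IHa Ha /IHb Hb]; apply: supported_fg_comm.
Qed.

Lemma reduced_cat_disjoint L R a b : [disjoint L & R] -> supported L a -> supported R b ->
  reduced a -> reduced b -> reduced (a ++ b).
Proof.
move=> dLR; case/lastP: a => [|a u] // Ha; case: b => [|v b] Hb ra rb.
  by rewrite cats0.
rewrite /reduced cat_rcons sorted_cat_cons /=.
apply/and3P; split; [exact: ra | | exact: rb].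
move: Ha Hb; rewrite /supported all_rcons /= => /andP [uL _] /andP [vR _].
by apply: contraL vR => /andP [/eqP <- _]; rewrite (disjointFr dLR uL).
Qed.

Lemma killed_fg_add L R S a b : [disjoint L & R] -> supported L a -> supported R b ->
  killed S (fg_add a b) = killed S a && killed S b.
Proof.
move=> dLR Ha Hb; rewrite /killed /fg_add restrict_reduce restrict_cat reduce_id.
  by rewrite -!nilpE cat_nilp.
by apply: (reduced_cat_disjoint dLR); rewrite ?supported_restrict ?reduced_restrict.
Qed.

End FreeGroup.

Definition threshold_word (T : finType) (V : {set T}) (k : nat) (w : seq (letter T)) :=
  supported V w /\ forall S, killed S w = (k <= #|S :&: V|).

Lemma exists_cut (s : nat) (J : seq nat) : J != [::] ->
  exists2 j : nat, j \in J &
    forall i : nat, i \in J -> (j < i -> s < i) /\ (i < j -> i <= s).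
Proof.
elim: J => [|x J IH] // _; case: J IH => [|y J] IH.
  by exists x => [|i]; rewrite ?inE // => /eqP ->; rewrite ltnn.
have [j Jj cut] := IH isT.
have inJ i : i \in [:: x, y & J] -> i = x \/ i \in y :: J.
  by rewrite inE => /orP [/eqP ->|]; [left|right].
have Jx : x \in [:: x, y & J] := mem_head _ _.
have Jj' : j \in [:: x, y & J] by rewrite inE Jj orbT.
case: (leqP x s) => xs; case: (leqP j s) => js.
- by exists (maxn x j) => [|i /inJ [->|/cut]]; [case: (leqP x j) | lia | lia].
- by exists j => // i /inJ [->|/cut //]; lia.
- by exists j => // i /inJ [->|/cut //]; lia.
- by exists (minn x j) => [|i /inJ [->|/cut]]; [case: (leqP x j) | lia | lia].
Qed.

Section CardExtension.
Variable T : finType.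
Implicit Types S X Y L R : {set T}.

Lemma card_setI_extend S X m : #|S :&: X| <= m <= #|X| ->
  exists S1, [/\ S \subset S1, S1 \subset S :|: X & #|S1 :&: X| = m].
Proof.
move=> /andP [le_m le_X]; have [d Em] : exists d, m = d + #|S :&: X|.
  by exists (m - #|S :&: X|); lia.
subst m.
elim: d S {le_m} le_X => [|d IH] S le_X; first by exists S; rewrite subsetUl.
have /subsetPn [x xX xS] : ~~ (X \subset S).
  by apply: contraTN le_X => /setIidPr ->; lia.
have cardSx : #|(x |: S) :&: X| = (#|S :&: X|).+1.
  by rewrite setIUl (setIidPl _) ?sub1set // cardsU1 !inE (negbTE xS).
have [S1 [sub1 sub2 card1]] := IH (x |: S) ltac:(lia).
exists S1; split; first exact: subset_trans (subsetUr _ _) sub1.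
  apply: (subset_trans sub2); apply/subsetP => y; rewrite !inE.
  by case/orP => [/orP [/eqP ->|->]|->]; rewrite ?xX ?orbT.
by rewrite card1 cardSx; lia.
Qed.

Lemma setI_extend_disjoint S S1 X Y : S \subset S1 -> S1 \subset S :|: X ->
  [disjoint X & Y] -> S1 :&: Y = S :&: Y.
Proof.
move=> sub1 sub2 dXY; apply/setP => y; rewrite !inE.
case Yy: (y \in Y); rewrite ?andbF ?andbT //.
apply/idP/idP => [S1y|]; last exact: (subsetP sub1).
by move: (subsetP sub2 y S1y); rewrite inE (disjointFl dXY Yy) orbF.
Qed.

Lemma card_setI_extend2 L R S m n : [disjoint L & R] ->
  #|S :&: L| <= m <= #|L| -> #|S :&: R| <= n <= #|R| ->
  exists S', [/\ S \subset S', #|S' :&: L| = m & #|S' :&: R| = n].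
Proof.
move=> dLR mL nR.
have [S1 [sub1 sub1' cardL]] := card_setI_extend mL.
have ER : S1 :&: R = S :&: R := setI_extend_disjoint sub1 sub1' dLR.
rewrite -ER in nR; have [S2 [sub2 sub2' cardR]] := card_setI_extend nR.
have EL : S2 :&: L = S1 :&: L.
  by apply: (setI_extend_disjoint sub2 sub2'); rewrite disjoint_sym.
by exists S2; split; rewrite ?EL //; apply: subset_trans sub1 sub2.
Qed.

Lemma card_setI_disjointU L R S : [disjoint L & R] ->
  #|S :&: (L :|: R)| = #|S :&: L| + #|S :&: R|.
Proof.
move=> dLR; rewrite setIUr cardsU setIACA setIid (disjoint_setI0 dLR).
by rewrite setI0 cards0 subn0.
Qed.

End CardExtension.

Section Split.
Variables (T : finType) (V L R : {set T}) (k : nat) (hL hR : nat -> seq (letter T)).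
Hypotheses (dLR : [disjoint L & R]) (VLR : L :|: R = V) (k_gt0 : 0 < k).

Let feasible j := k - #|R| <= j <= minn k #|L|.
Let D := Dj k hL hR.
Let J := iota (k - #|R|) ((minn k #|L|).+1 - (k - #|R|)).

Hypothesis hL_threshold : forall j, feasible j -> 0 < j -> threshold_word L j (hL j).
Hypothesis hR_threshold :
  forall j, feasible j -> j < k -> threshold_word R (k - j) (hR (k - j)).

Definition D_killed (S : {set T}) j := (j <= #|S :&: L|) && (k - j <= #|S :&: R|).

Lemma memJ j : (j \in J) = feasible j.
Proof. by rewrite mem_iota /feasible; apply/idP/idP; lia. Qed.

Lemma supported_D j : feasible j -> supported V (D j).
Proof.
have [subL subR] : L \subset V /\ R \subset V by rewrite -VLR subsetUl subsetUr.
move=> Fj; rewrite /D /Dj; case: eqVneq => [j0|j0].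
  by subst j; have [+ _] := hR_threshold Fj k_gt0; rewrite subn0; apply: supported_subset.
case: eqVneq => [jk|jk].
  by subst j; have [+ _] := hL_threshold Fj k_gt0; apply: supported_subset.
have j_gt0 : 0 < j by rewrite lt0n.
have j_lt_k : j < k by rewrite ltn_neqAle jk; move: Fj; rewrite /feasible; lia.
have [sL _] := hL_threshold Fj j_gt0; have [sR _] := hR_threshold Fj j_lt_k.
apply: supported_reduce.
by rewrite supported_cat (supported_subset subL sL) (supported_subset subR sR).
Qed.

Lemma killed_D S j : feasible j -> killed S (D j) = D_killed S j.
Proof.
move=> Fj; rewrite /D /Dj /D_killed; case: eqVneq => [j0|j0].
  by subst j; have [_] := hR_threshold Fj k_gt0; rewrite !subn0 => ->.
case: eqVneq => [jk|jk].
  by subst j; have [_ ->] := hL_threshold Fj k_gt0; rewrite subnn andbT.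
have j_gt0 : 0 < j by rewrite lt0n.
have j_lt_k : j < k by rewrite ltn_neqAle jk; move: Fj; rewrite /feasible; lia.
have [sL kL] := hL_threshold Fj j_gt0; have [sR kR] := hR_threshold Fj j_lt_k.
by rewrite (killed_fg_add S dLR sL sR) kL kR.
Qed.

Lemma D_inj : {in J &, injective D}.
Proof.
move=> i j; rewrite !memJ => Fi Fj EDij.
have [S [_ cardL cardR]] := @card_setI_extend2 _ L R set0 i (k - i) dLR
  ltac:(rewrite set0I cards0; move: Fi; rewrite /feasible; lia)
  ltac:(rewrite set0I cards0; move: Fi; rewrite /feasible; lia).
have := killed_D S Fi; rewrite EDij (killed_D S Fj) /D_killed cardL cardR !leqnn.
by move=> /andP [? ?]; move: Fi Fj; rewrite /feasible; lia.
Qed.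

Lemma D_killed_extend S S' js j : js <= k ->
  #|S' :&: L| = maxn #|S :&: L| js -> #|S' :&: R| = maxn #|S :&: R| (k - js) ->
  ~~ D_killed S j -> (js < j -> #|S :&: L| < j) -> (j < js -> j <= #|S :&: L|) ->
  D_killed S' j = (j == js).
Proof. by rewrite /D_killed => *; lia. Qed.

(* The only leaf that dies once S is enlarged to meet L in max(|S :&: L|, js)
   nails and R in max(|S :&: R|, k - js) nails is D js. *)
Lemma separated_D A B : A ++ B != [::] -> {subset A ++ B <= map D J} ->
  uniq (A ++ B) -> separated A B.
Proof.
move=> AB0 subAB uAB S nA nB.
have /hasPn alive : ~~ has (killed S) (A ++ B) by rewrite has_cat negb_or nA nB.
set I := [seq j <- J | D j \in A ++ B].
have I0 : I != [::].
  rewrite -size_eq0 size_filter -lt0n -has_count; apply/hasP.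
  case: (A ++ B) AB0 subAB => [|w AB] // _ /(_ w (mem_head _ _)) /mapP [j Jj Ew].
  by exists j; rewrite // -Ew mem_head.
have [js Ijs cut] := exists_cut #|S :&: L| I0.
move: (Ijs); rewrite mem_filter memJ => /andP [ABjs Fjs].
have cardSL : #|S :&: L| <= #|L| by apply/subset_leq_card/subsetIr.
have cardSR : #|S :&: R| <= #|R| by apply/subset_leq_card/subsetIr.
have [S' [subS' cardL cardR]] := @card_setI_extend2 _ L R S
  (maxn #|S :&: L| js) (maxn #|S :&: R| (k - js)) dLR
  ltac:(move: Fjs; rewrite /feasible; lia) ltac:(move: Fjs; rewrite /feasible; lia).
exists S' => //.
have killedE w : w \in A ++ B -> killed S' w = (w == D js).
  move=> wAB; have /mapP [j Jj Ew] := subAB w wAB; subst w.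
  have Ij : j \in I by rewrite mem_filter Jj wAB.
  have js_le_k : js <= k by move: Fjs; rewrite /feasible; lia.
  rewrite (inj_in_eq D_inj Jj) ?memJ // killed_D -?memJ //.
  apply: (D_killed_extend js_le_k cardL cardR); try by case: (cut j Ij).
  by rewrite -killed_D -?memJ // alive.
have hasE C : {subset C <= A ++ B} -> has (killed S') C = (D js \in C).
  by move=> sC; rewrite -has_pred1; apply: eq_in_has => w /sC /killedE.
rewrite (hasE A) => [|w wA]; last by rewrite mem_cat wA.
rewrite (hasE B) => [|w wB]; last by rewrite mem_cat wB orbT.
move: uAB ABjs; rewrite cat_uniq mem_cat => /and3P [_ dAB _] ABjs.
apply: contraNN dAB => /eqP eAB; apply/hasP; exists (D js).
  by move: ABjs; rewrite eAB orbb.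
by rewrite /= eAB; move: ABjs; rewrite eAB orbb.
Qed.

Lemma separating_D (t : ctree T) : {subset cleaves t <= map D J} -> uniq (cleaves t) ->
  separating t.
Proof.
elim: t => [w|a IHa b IHb] //= sub uab; move: (uab); rewrite cat_uniq => /and3P [ua _ ub].
split; last 2 first.
- by apply: IHa => // w wa; apply: sub; rewrite mem_cat wa.
- by apply: IHb => // w wb; apply: sub; rewrite mem_cat wb orbT.
by apply: separated_D => //; case: (cleaves a) (cleaves_neq0 a).
Qed.

Lemma threshold_cvalue (t : ctree T) : perm_eq (cleaves t) (map D J) ->
  threshold_word V k (cvalue t).
Proof.
move=> pt; have sub : {subset cleaves t <= map D J} by move=> w; rewrite (perm_mem pt).
have ut : uniq (cleaves t) by rewrite (perm_uniq pt) (map_inj_in_uniq D_inj) iota_uniq.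
split.
  apply: supported_cvalue; apply/allP => w /sub /mapP [j Jj ->].
  by apply: supported_D; rewrite -memJ.
move=> S; rewrite (killed_cvalue (separating_D sub ut)) (perm_has _ pt) has_map.
rewrite (@eq_in_has _ _ (D_killed S)) => [|j Jj]; last by rewrite /= killed_D -?memJ.
have cardSL : #|S :&: L| <= #|L| by apply/subset_leq_card/subsetIr.
have cardSR : #|S :&: R| <= #|R| by apply/subset_leq_card/subsetIr.
rewrite -VLR (card_setI_disjointU _ dLR); apply/hasP/idP => [[j _ /andP [jL jR]]|kS].
  by lia.
by exists (minn #|S :&: L| k); rewrite ?memJ /feasible /D_killed; lia.
Qed.

End Split.

Lemma Hword_threshold (T : finType) (V : {set T}) k w : Hword V k w -> threshold_word V k w.
Proof.
elim=> [x | {}V L R {}k hL hR t _ /andP [k_gt0 _] dLR VLR _ _ _ IHL _ IHR pt].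
  split; first by rewrite /supported /= inE eqxx.
  move=> S; rewrite card_gt0 setI_eq0 disjoint_sym disjoints1 negbK.
  by rewrite /killed /restrict /=; case: (x \in S).
exact: threshold_cvalue pt.
Qed.

Theorem theorem2 (T : finType) (V : {set T}) (k : nat) (w : seq (letter T)) :
  V != set0 -> 1 <= k <= #|V| -> Hword V k w ->
  forall S : {set T}, S \subset V -> (restrict S w = [::] <-> k <= #|S|).
Proof.
move=> _ _ /Hword_threshold [_ kill] S /setIidPl SV.
by rewrite -{2}SV -kill; apply: rwP eqP.
Qed.
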